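(* Let $G$ be a finite, simple, connected graph of order $n$. If $G$ contains a cycle, then $\beta(G)\leq n-g(G)+2$, where $g(G)$ is the girth of $G$ and $\beta(G)$ is the metric dimension of $G$.
   Context: For vertices $x,y$ of a connected graph $G$, $d(x,y)$ denotes the length of a shortest $x$–$y$ path. A set $W\subseteq V(G)$ is a resolving set for $G$ if for every two distinct vertices $u,v\in V(G)$ there exists $w\in W$ with $d(u,w)\neq d(v,w)$. The metric dimension $\beta(G)$ is the minimum cardinality of a resolving set for $G$. If $G$ has a cycle, the girth $g(G)$ is the length of a shortest cycle in $G$. *)

From mathcomp Require Import all_boot.
Set Implicit Arguments. Unset Strict Implicit. Unset Printing Implicit Defensive.

Section Graph.
Variables (T : finType) (e : rel T).

Definition has_walk (x y : T) (k : nat) : bool :=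
  [exists p : k.-tuple T, path e x p && (last x p == y)].

(* d(x,y): the least length of an x-y walk (= length of a shortest x-y path).
   In a connected graph this is < #|T|, so searching 0..#|T|-1 suffices. *)
Definition dist (x y : T) : nat := find (has_walk x y) (iota 0 #|T|).

Definition resolving (W : {set T}) : bool :=
  [forall u, forall v, (u != v) ==> [exists w in W, dist u w != dist v w]].

Definition metric_dim : nat :=
  find (fun k => [exists W : {set T}, resolving W && (#|W| == k)]) (iota 0 #|T|.+1).

Definition has_cycle_len (k : nat) : bool :=
  (2 < k) && [exists c : k.-tuple T, cycle e c && uniq c].

Definition has_cycle : Prop := exists k, has_cycle_len k.

(* girth: length of a shortest cycle (cycles have length <= #|T|). *)
Definition girth : nat := find has_cycle_len (iota 0 #|T|.+1).

Definition simple_graph : Prop := symmetric e /\ irreflexive e.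
Definition connected_graph : Prop := forall x y : T, connect e x y.

End Graph.

From mathcomp Require Import all_boot.
From mathcomp Require Import zify.

Set Implicit Arguments.
Unset Strict Implicit.
Unset Printing Implicit Defensive.

(* A shortest cycle [C] is isometric: vertices at distance [k <= g/2] along [C] are at distance
   [k] in [G], since a shortcut would close a shorter cycle.  On an isometric cycle two adjacent
   vertices [c_0], [c_1] tell all vertices of [C] apart by their distances, and every vertex
   is told apart from the others by itself; hence [c_0], [c_1] and the [n - g] vertices off [C]
   form a resolving set. *)

Lemma find_iota_leq (P : pred nat) N k : k < N -> P k -> find P (iota 0 N) <= k.
Proof.
move=> kN Pk; rewrite leqNgt; apply/negP => /(before_find 0).
by rewrite nth_iota // add0n Pk.
Qed.

Lemma nth_rot0 (T : Type) (x0 : T) s k : k < size s -> nth x0 (rot k s) 0 = nth x0 s k.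
Proof. by move=> ks; rewrite /rot nth_cat size_drop subn_gt0 ks nth_drop addn0. Qed.

Lemma nth_rot_sub (T : Type) (x0 : T) s k : 0 < k <= size s ->
  nth x0 (rot k s) (size s - k) = nth x0 s 0.
Proof. by case/andP=> k0 ks; rewrite /rot nth_cat size_drop ltnn subnn nth_take. Qed.

Lemma nth_rot1 (T : Type) (x0 : T) s k :
  0 < k < size s -> nth x0 (rot 1 s) k.-1 = nth x0 s k.
Proof.
case: k => // k /andP[_ ks]; rewrite /rot nth_cat size_drop /=.
by rewrite ltn_subRL add1n ks nth_drop.
Qed.

Lemma last_take_nth (T : Type) (x0 x : T) s i : i <= size s ->
  last x (take i s) = nth x0 (x :: s) i.
Proof.
move=> i_s; rewrite (last_nth x0) size_takel //.
by case: i i_s => //= i i_s; rewrite nth_take.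
Qed.

(* On a cycle of length [g], vertex [i] is at distance [minn i (g - i)] from vertex [0] and at
   distance [minn i.-1 (g - i.-1)] from vertex [1]. *)
Lemma cycle_dist_adjacent_inj g i j : 0 < i < g -> 0 < j < g ->
  minn i (g - i) = minn j (g - j) -> minn i.-1 (g - i.-1) = minn j.-1 (g - j.-1) -> i = j.
Proof. lia. Qed.

Lemma card_setCU2 (T : finType) (A : {set T}) a b :
  #|~: A :|: [set a; b]| <= #|T| - #|A| + 2.
Proof.
rewrite -(cardsC A) addKn; apply: leq_trans (leq_card_setU _ _) _.
by rewrite leq_add2l cards2; case: (a != b).
Qed.

Lemma metric_dim_leq (T : finType) (e : rel T) W : resolving e W -> metric_dim e <= #|W|.
Proof.
move=> resW; apply: find_iota_leq; first by rewrite ltnS max_card.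
by apply/existsP; exists W; rewrite resW /=.
Qed.

Section Graph.
Variables (T : finType) (e : rel T).

Lemma has_walkP x y k :
  reflect (exists p, [/\ path e x p, last x p = y & size p = k]) (has_walk e x y k).
Proof.
apply: (iffP existsP) => [[p /andP[pp /eqP lp]] | [p [pp lp sp]]].
  by exists p; rewrite size_tuple.
have sz : size p == k by rewrite sp.
by exists (Tuple sz); rewrite /= pp lp eqxx.
Qed.

Lemma size_uniq_path_lt (x : T) p : uniq (x :: p) -> size p < #|T|.
Proof. by move/card_uniqP => /= <-; apply: max_card. Qed.

Lemma dist_path_leq x p : path e x p -> dist e x (last x p) <= size p.
Proof.
case/shortenP=> p' pp' up' sub'; apply: leq_trans (uniq_leq_size _ sub'); last first.
  by case/andP: up'.
apply: find_iota_leq; first exact: size_uniq_path_lt up'.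
by apply/has_walkP; exists p'.
Qed.

Lemma dist_xx x : dist e x x = 0.
Proof. by apply/eqP; rewrite -leqn0; apply: (@dist_path_leq x [::]). Qed.

Hypothesis e_sym : symmetric e.

Lemma has_walk_sym x y k : has_walk e x y k -> has_walk e y x k.
Proof.
case/has_walkP => p [pp <- sp]; apply/has_walkP; exists (rev (belast x p)); split.
- by rewrite rev_path; apply: sub_path pp => a b /=; rewrite e_sym.
- by case: p {pp sp} => //= a p; rewrite rev_cons last_rcons.
- by rewrite size_rev size_belast.
Qed.

Lemma distC x y : dist e x y = dist e y x.
Proof. by apply: eq_find => k; apply/idP/idP; apply: has_walk_sym. Qed.

Lemma cycle_of_diverging_paths x p q :
  path e x p -> path e x q -> last x p = last x q ->
  uniq (x :: p) -> uniq (x :: q) -> p != [::] -> head x p != head x q ->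
  exists2 c : seq T, cycle e c && uniq c & 2 < size c <= size p + size q.
Proof.
move=> pp pq lpq up uq p_nil hpq.
have lastp : last x p \in p.
  by case: p p_nil {pp lpq up hpq} => //= a p _; apply: mem_last.
have q_nil : q != [::].
  by apply: contraNneq p_nil => q0; move: up lastp; rewrite lpq q0 /= => /andP[/negP].
have meet : has (mem q) p.
  apply/hasP; exists (last x p); rewrite // lpq.
  by case: q q_nil {pq lpq uq hpq} => //= a q _; apply: mem_last.
(* [z] is the first vertex of [p] on [q]; the cycle runs along [p] to [z] and back along [q]. *)
case: (split_find_nth x meet) pp up hpq => z p1 p2 zq p1q pp up hpq.
case: (path.splitP zq) pq uq hpq p1q => q1 q2 pq uq hpq p1q.
move: pp pq; rewrite !cat_path => /andP[pp1 _] /andP[pq1 _].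
move: up uq; rewrite -!cat_cons !cat_uniq => /andP[up1 _] /andP[uq1 _].
move: uq1; rewrite /= rcons_uniq mem_rcons !inE negb_or.
case/andP => /andP[xz xq1] /andP[zq1 uq1].
have : path (fun a b => e b a) x (rcons q1 z).
  by apply: sub_path pq1 => a b /=; rewrite e_sym.
rewrite -rev_path last_rcons belast_rcons rev_cons => pq1r.
exists (x :: rcons p1 z ++ rev q1).
  apply/andP; split; first by rewrite /= rcons_cat cat_path pp1 last_rcons.
  rewrite -cat_cons cat_uniq rev_uniq up1 uq1 andbT.
  apply/hasPn => v; rewrite mem_rev => vq1.
  rewrite !inE mem_rcons !inE !negb_or; apply/and3P; split.
  - by apply: contraNneq xq1 => <-.
  - by apply: contraNneq zq1 => <-.
  - apply/negP => /(hasPn p1q).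
    by rewrite inE mem_cat mem_rcons inE vq1 !orbT.
have : 0 < size p1 + size q1.
  by move: hpq; case: (p1) => //; case: (q1) => //=; rewrite eqxx.
rewrite /= size_cat size_rev !size_cat !size_rcons.
move: (size p1) (size q1) (size p2) (size q2) => a b c d.
clear; lia.
Qed.

Lemma cycle_of_distinct_paths x p q :
  path e x p -> path e x q -> last x p = last x q ->
  uniq (x :: p) -> uniq (x :: q) -> p != q ->
  exists2 c : seq T, cycle e c && uniq c & 2 < size c <= size p + size q.
Proof.
elim: p x q => [|a p IHp] x [|b q] //.
- by move=> _ _ /= lq _ /andP[]; rewrite lq mem_last.
- by move=> _ _ /= lq /andP[]; rewrite -lq mem_last.
case: (eqVneq a b) => [<- | ab] pp pq lpq up uq pq_neq; last first.
  exact: cycle_of_diverging_paths pp pq lpq up uq isT ab.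
move: pp pq up uq pq_neq => /= /andP[_ pp] /andP[_ pq] /andP[_ up] /andP[_ uq].
rewrite eqseq_cons eqxx /= => pq_neq.
have [c cc /andP[c2 cpq]] := IHp a q pp pq lpq up uq pq_neq.
by exists c; rewrite // c2 (leq_trans cpq) // addnS leqW // -addSn.
Qed.

Hypothesis e_connected : connected_graph e.

Lemma has_walk_dist x y : has_walk e x y (dist e x y).
Proof.
have /connectP [p pp lp] := e_connected x y.
case/shortenP: pp lp => p' pp' up' _ lp.
have hs : has (has_walk e x y) (iota 0 #|T|).
  apply/hasP; exists (size p'); first by rewrite mem_iota (size_uniq_path_lt up').
  by apply/has_walkP; exists p'.
have := nth_find 0 hs; rewrite has_find size_iota in hs.
by rewrite nth_iota.
Qed.

Lemma dist_eq0 x y : (dist e x y == 0) = (x == y).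
Proof.
apply/eqP/eqP => [d0 | ->]; last exact: dist_xx.
have := has_walk_dist x y; rewrite d0.
by case/has_walkP => [[|? ?] [_ <-]].
Qed.

Lemma has_cycle_len_cycle c :
  cycle e c -> uniq c -> 2 < size c -> has_cycle_len e (size c).
Proof.
move=> cc uc c2; rewrite /has_cycle_len c2; apply/existsP.
by exists (in_tuple c); rewrite /= cc uc.
Qed.

Lemma has_cycle_len_leq_card k : has_cycle_len e k -> k <= #|T|.
Proof.
case/andP => _ /existsP [c /andP[_ /card_uniqP]].
by rewrite size_tuple => <-; apply: max_card.
Qed.

Lemma girth_leq k : has_cycle_len e k -> girth e <= k.
Proof. by move=> ek; apply: find_iota_leq; rewrite // ltnS has_cycle_len_leq_card. Qed.

Lemma girth_cycle : has_cycle e ->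
  exists c, [/\ cycle e c, uniq c, 2 < size c & size c = girth e].
Proof.
case=> k ek; have hs : has (has_cycle_len e) (iota 0 #|T|.+1).
  by apply/hasP; exists k; rewrite // mem_iota ltnS has_cycle_len_leq_card.
have := nth_find 0 hs; rewrite has_find size_iota in hs.
rewrite nth_iota // add0n -/(girth e) => /andP[g2 /existsP [c /andP[cc uc]]].
by exists c; rewrite size_tuple.
Qed.

Lemma dist_nth_cycle_leq x0 c i : cycle e c -> i < size c ->
  dist e (nth x0 c 0) (nth x0 c i) <= i.
Proof.
case: c => [|a s] //=; rewrite rcons_path => /andP[pas _] ic.
have := dist_path_leq (take_path i pas).
by rewrite size_takel // (last_take_nth x0).
Qed.

(* A shortcut from [c_0] to [c_i] together with the arc [c_0 .. c_i] would close a cycle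
   shorter than [c]. *)
Lemma dist_nth_girth_cycle_geq x0 c i :
  cycle e c -> uniq c -> size c = girth e -> i + i <= size c ->
  i <= dist e (nth x0 c 0) (nth x0 c i).
Proof.
case: c => [_ _ _ | a s]; first by rewrite leqn0 addn_eq0 => /andP[/eqP-> _].
rewrite /= rcons_path => /andP[pas _] /andP[a_s s_uniq] sg ii.
have i_s : i <= size s by move: ii => /= ii; clear -ii; lia.
rewrite leqNgt; apply/negP => short.
have /has_walkP[p [pp lp sp]] := has_walk_dist a (nth x0 (a :: s) i).
case/shortenP: pp lp => p' pp' up' sub' lp'.
have sp' : size p' <= size p by apply: uniq_leq_size sub'; case/andP: up'.
have uq : uniq (a :: take i s).
  by rewrite /= take_uniq // andbT; apply: contra a_s => /mem_take.
have p'q : p' != take i s.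
  by apply/eqP => p'E; move: sp'; rewrite p'E size_takel // sp leqNgt short.
have lp'q : last a p' = last a (take i s) by rewrite lp' (last_take_nth x0).
have [c' /andP[cc' uc'] /andP[c'2 c'le]] :=
  cycle_of_distinct_paths pp' (take_path i pas) lp'q up' uq p'q.
have c'_short : size c' < girth e.
  rewrite -sg; apply: leq_trans ii; apply: leq_ltn_trans c'le _.
  by rewrite size_takel // ltn_add2r (leq_ltn_trans sp') // sp.
by have := girth_leq (has_cycle_len_cycle cc' uc' c'2); rewrite leqNgt c'_short.
Qed.

Lemma dist_nth_girth_cycle x0 c i :
  cycle e c -> uniq c -> size c = girth e -> i < size c ->
  dist e (nth x0 c 0) (nth x0 c i) = minn i (size c - i).
Proof.
have half c' j : cycle e c' -> uniq c' -> size c' = girth e ->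
    j < size c' -> j + j <= size c' -> dist e (nth x0 c' 0) (nth x0 c' j) = j.
  move=> cc uc cg jc jj; apply/eqP; rewrite eqn_leq.
  by rewrite dist_nth_cycle_leq // dist_nth_girth_cycle_geq.
move=> cc uc cg ic; case: (leqP (i + i) (size c)) => ii.
  by rewrite half //; apply/esym/minn_idPl; clear -ii; lia.
have -> : minn i (size c - i) = size c - i by apply/minn_idPr; clear -ii; lia.
(* Seen from [c_i], i.e. along the rotated cycle, [c_0] sits at index [size c - i]. *)
rewrite distC -(nth_rot0 x0 ic) -(nth_rot_sub x0 (s := c) (k := i)); last first.
  by clear -ii ic; lia.
by rewrite -(size_rot i c) half ?rot_cycle ?rot_uniq ?size_rot //; clear -ii ic; lia.
Qed.

Lemma resolving_cycleC_adjacent x0 c :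
  cycle e c -> uniq c -> size c = girth e -> 1 < size c ->
  resolving e (~: [set x in c] :|: [set nth x0 c 0; nth x0 c 1]).
Proof.
set W := _ :|: _ => cc uc cg c1.
have dist0 k : k < size c ->
    dist e (nth x0 c k) (nth x0 c 0) = minn k (size c - k).
  by move=> kc; rewrite distC dist_nth_girth_cycle.
have dist1 k : 0 < k < size c ->
    dist e (nth x0 c k) (nth x0 c 1) = minn k.-1 (size c - k.-1).
  move=> kc; rewrite distC -(nth_rot0 x0 c1) -(nth_rot1 x0 kc).
  rewrite dist_nth_girth_cycle ?rot_cycle ?rot_uniq ?size_rot //.
  by case/andP: kc; case: k => // k _ /ltnW.
have on_cycle w : w \notin W -> exists2 k, 0 < k < size c & nth x0 c k = w.
  rewrite !inE negb_or negbK => /andP[wc /norP[w0 _]].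
  exists (index w c); last exact: nth_index.
  rewrite index_mem wc andbT lt0n; apply: contraNneq w0 => iw0.
  by rewrite -iw0 nth_index.
apply/forallP => u; apply/forallP => v; apply/implyP => uv; apply/existsP.
have [uW | /on_cycle [i ic ui]] := boolP (u \in W).
  by exists u; rewrite uW dist_xx eq_sym dist_eq0 eq_sym.
have [vW | /on_cycle [j jc vj]] := boolP (v \in W).
  by exists v; rewrite vW dist_xx dist_eq0.
subst u v; set c0 := nth x0 c 0.
have [d0 | d0] := eqVneq (dist e (nth x0 c i) c0) (dist e (nth x0 c j) c0).
  exists (nth x0 c 1); rewrite !inE eqxx !orbT /=; apply: contra uv => /eqP d1.
  rewrite !dist0 ?(andP ic).2 ?(andP jc).2 // in d0.
  by rewrite !dist1 // in d1; rewrite (cycle_dist_adjacent_inj ic jc d0 d1).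
by exists c0; rewrite !inE eqxx !orbT.
Qed.

End Graph.

Theorem theorem2p1 (T : finType) (e : rel T) :
  simple_graph e -> connected_graph e -> has_cycle e ->
  metric_dim e <= #|T| - girth e + 2.
Proof.
move=> [e_sym _] e_conn /girth_cycle [[|x0 s] [cc uc c2 cg]] //.
have resW := resolving_cycleC_adjacent e_sym e_conn x0 cc uc cg (ltnW c2).
have card_c : #|[set x in x0 :: s]| = size (x0 :: s) by rewrite cardsE; apply/card_uniqP.
rewrite -cg -card_c.
exact: leq_trans (metric_dim_leq resW) (card_setCU2 _ _ _).
Qed.
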